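(* Let $F\in\mathbb C[x,y,s,t]$ be a polynomial of degree $d$ that is not Cartesian. Then there are at most $d^2$ points $q=(s_q,t_q)\in\mathbb C^2$ for which $C_q=\mathbb C^2$, where $C_q=\{(x,y)\in\mathbb C^2: F(x,y,s_q,t_q)=0\}$.
   Context: $F\in\mathbb C[x,y,s,t]$ is Cartesian if there exist $G\in\mathbb C[x,y]\setminus\mathbb C$, $K\in\mathbb C[s,t]\setminus\mathbb C$ and $H,L\in\mathbb C[x,y,s,t]$ with $F=G(x,y)H(x,y,s,t)+K(s,t)L(x,y,s,t)$. *)

(* C := R[i] for R : realType (the real numbers), i.e. the
   complex numbers; polynomials in C[x,y,s,t] are {mpoly C[4]} with variable
   indices x = 0, y = 1, s = 2, t = 3. *)
From HB Require Import structures.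
From mathcomp Require Import all_boot all_algebra.
From mathcomp Require Import reals complex.
From mathcomp Require Import mpoly.
Set Implicit Arguments. Unset Strict Implicit. Unset Printing Implicit Defensive.
Import GRing.Theory Num.Theory.
Local Open Scope ring_scope.

Section Defs.
Variable K : ringType.

Definition ix : 'I_4 := @Ordinal 4 0 isT.
Definition iy : 'I_4 := @Ordinal 4 1 isT.
Definition is_ : 'I_4 := @Ordinal 4 2 isT.
Definition it : 'I_4 := @Ordinal 4 3 isT.

Definition embed_xy (G : {mpoly K[2]}) : {mpoly K[4]} :=
  G \mPo [tuple 'X_ix; 'X_iy].
Definition embed_st (G : {mpoly K[2]}) : {mpoly K[4]} :=
  G \mPo [tuple 'X_is_; 'X_it].

(* total degree of a polynomial (msize = 1 + degree, 0 for the zero poly) *)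
Definition tdeg n (F : {mpoly K[n]}) : nat := (msize F).-1.

Definition nonconst n (G : {mpoly K[n]}) : Prop := forall c : K, G <> c%:MP.

Definition cartesian (F : {mpoly K[4]}) : Prop :=
  exists (G Kp : {mpoly K[2]}) (H L : {mpoly K[4]}),
    nonconst G /\ nonconst Kp /\ F = embed_xy G * H + embed_st Kp * L.

Definition ev4 (F : {mpoly K[4]}) (x y s t : K) : K :=
  F.@[tnth [tuple x; y; s; t]].

End Defs.

From HB Require Import structures.
From mathcomp Require Import all_boot all_algebra.
From mathcomp Require Import reals complex.
From mathcomp Require Import mpoly.
From mathcomp Require Import perm zify ring.
From Stdlib Require Import Classical.
Set Implicit Arguments. Unset Strict Implicit. Unset Printing Implicit Defensive.
Import GRing.Theory Num.Theory.
Local Open Scope ring_scope.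

(* C_q = C^2 exactly when q is a common zero of the coefficients f_ab(s, t) of F viewed
   as a polynomial in x and y.  A nonconstant common factor h of the f_ab would give the
   Cartesian decomposition F = x * 0 + h * L, so when F is not Cartesian these curves of
   degree at most d, not all zero, have no common component, and Bezout's bound for such a
   family gives at most d^2 common zeros.  The bound is proved by induction on the family:
   two coprime curves of degrees m and n are sheared so that their common zeros have
   distinct first coordinates, which are then distinct roots of the resultant, a polynomial
   of degree at most m n; a curve f sharing a component h with the next member of the
   family is split as f = k h, and the zeros of h and of k are counted separately. *)

Lemma rmorph_mmap n (R S T : nzRingType) (f : R -> S) (h : 'I_n -> S)
    (phi : {rmorphism S -> T}) (p : {mpoly R[n]}) :
  phi (mmap f h p) = mmap (phi \o f) (phi \o h) p.
Proof.
rewrite /mmap rmorph_sum; apply: eq_bigr => m _.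
rewrite rmorphM /mmap1 rmorph_prod /=; congr (_ * _).
by apply: eq_bigr => i _; rewrite rmorphXn.
Qed.

Lemma eq_mmap n (R S : nzRingType) (f1 f2 : R -> S) (h1 h2 : 'I_n -> S)
    (p : {mpoly R[n]}) :
  f1 =1 f2 -> h1 =1 h2 -> mmap f1 h1 p = mmap f2 h2 p.
Proof.
move=> ef eh; rewrite /mmap; apply: eq_bigr => m _.
by rewrite ef (mmap1_eq _ eh).
Qed.

Lemma mpoly_rmorph_id n (R : comNzRingType)
    (phi : {rmorphism {mpoly R[n]} -> {mpoly R[n]}}) :
  (forall c, phi c%:MP = c%:MP) -> (forall i, phi 'X_i = 'X_i) -> phi =1 id.
Proof.
move=> hC hX p; rewrite [in RHS](mpolyE p) [in LHS](mpolyE p) rmorph_sum.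
apply: eq_bigr => m _; rewrite -mul_mpolyC rmorphM hC mpolyXE_id rmorph_prod.
by congr (_ * _); apply: eq_bigr => i _; rewrite rmorphXn hX.
Qed.

Lemma horner_map_polyC_X (R : comNzRingType) (r : {poly R}) :
  (map_poly polyC r).['X] = r.
Proof.
rewrite horner_coef size_map_polyC -[r in RHS]coefK poly_def.
by apply: eq_bigr => i _; rewrite coef_map /= mul_polyC.
Qed.

Section InfiniteField.
Variable K : numClosedFieldType.

Lemma exists_nonroot (p : {poly K}) : p != 0 -> exists x, ~~ root p x.
Proof.
move=> nz_p; pose xs := [seq i%:R | i <- iota 0 (size p)] : seq K.
have uniq_xs : uniq xs.
  by rewrite map_inj_uniq ?iota_uniq // => i j /eqP; rewrite eqr_nat => /eqP.
have : ~~ all (root p) xs.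
  apply/negP => roots_xs; have := max_poly_roots nz_p roots_xs uniq_xs.
  by rewrite size_map size_iota ltnn.
by case/allPn => x _ hx; exists x.
Qed.

Lemma poly_fun_eq0 (p : {poly K}) : (forall x, p.[x] = 0) -> p = 0.
Proof.
move=> p0; apply/eqP; apply: contraT => /exists_nonroot [x].
by rewrite /root p0 eqxx.
Qed.

End InfiniteField.

Section Bivariate.
Variable K : numClosedFieldType.
Local Notation P2 := {poly {poly K}}.

Definition primitiveXY (r : P2) := forall a : K, map_poly (horner_eval a) r != 0.

Lemma coefs_root_factor (k : P2) a : map_poly (horner_eval a) k = 0 ->
  exists k1 : P2, k = ('X - a%:P) *: k1.
Proof.
move=> ka0; exists (\poly_(i < size k) (k`_i %/ ('X - a%:P))).
apply/polyP => i; rewrite coefZ coef_poly.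
case: ltnP => lt_i; last by rewrite mulr0; apply/(leq_sizeP _ _ (leqnn _)).
have : (map_poly (horner_eval a) k)`_i = 0 by rewrite ka0 coef0.
rewrite coef_map /= /horner_eval => /eqP ki_a.
have XsubC_dvd : ('X - a%:P) %| k`_i by rewrite dvdp_XsubCl.
by rewrite mulrC divpK.
Qed.

Lemma primitiveXY_decomp (r : P2) : r != 0 ->
  exists e r', [/\ r = e *: r', primitiveXY r' & size r' = size r].
Proof.
move: {2}(size (lead_coef r)) (leqnn (size (lead_coef r))) => n.
elim: n r => [|n IH] r hs nz_r.
  by move: hs; rewrite leqn0 size_poly_eq0 lead_coef_eq0 (negPf nz_r).
have [prim_r|] := classic (primitiveXY r); first by exists 1, r; rewrite scale1r.
move=> /not_all_ex_not [a /negP]; rewrite negbK => /eqP /coefs_root_factor [r1 def_r].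
have nzX : ('X - a%:P : {poly K}) != 0 by rewrite polyXsubC_eq0.
have nz_r1 : r1 != 0 by apply: contra nz_r; rewrite def_r => /eqP ->; rewrite scaler0.
have [|e [r' [def_r1 prim_r' size_r']]] := IH r1 _ nz_r1.
  by move: hs; rewrite def_r lead_coefZ size_mul ?lead_coef_eq0 // size_XsubC.
exists (('X - a%:P) * e), r'; split => //; first by rewrite def_r def_r1 scalerA.
by rewrite size_r' def_r size_scale.
Qed.

Lemma primitiveXY_gauss (c : {poly K}) (f k r : P2) :
  c != 0 -> primitiveXY r -> c *: f = k * r -> exists k', f = k' * r.
Proof.
move: {2}(size c) (leqnn (size c)) => n.
elim: n c k => [|n IH] c k hs nz_c prim_r def_cf.
  by move: hs; rewrite leqn0 size_poly_eq0 (negPf nz_c).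
have [c_const|] := eqVneq (size c) 1%N.
  have c_unit : c \is a GRing.unit.
    rewrite poly_unitE c_const eqxx /= unitfE.
    by have := nz_c; rewrite -lead_coef_eq0 lead_coefE c_const.
  by exists (c^-1 *: k); rewrite -scalerAl -def_cf scalerA mulVr ?scale1r.
move=> /closed_rootP [a /factor_theorem [c1 def_c]].
have nz_c1 : c1 != 0 by apply: contra nz_c; rewrite def_c => /eqP ->; rewrite mul0r.
have k_a0 : map_poly (horner_eval a) k = 0.
  have := congr1 (map_poly (horner_eval a)) def_cf.
  rewrite -mul_polyC !rmorphM /= map_polyC /= /horner_eval def_c hornerM.
  rewrite hornerXsubC subrr mulr0 mul0r => /esym /eqP.
  by rewrite mulf_eq0 (negPf (prim_r a)) orbF => /eqP.
have [k1 def_k] := coefs_root_factor k_a0.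
apply: (IH c1 k1) => //.
  by move: hs; rewrite def_c size_mul ?polyXsubC_eq0 // size_XsubC addn2.
have /mulfI : (('X - a%:P)%:P : P2) != 0 by rewrite polyC_eq0 polyXsubC_eq0.
by apply; rewrite !mul_polyC scalerA mulrC -def_c def_cf def_k scalerAl.
Qed.

Lemma resultant_eq0_common_factor (f g : P2) : resultant f g = 0 ->
  exists2 h : P2, (1 < size h)%N & (exists k, f = k * h) /\ (exists k, g = k * h).
Proof.
move/eqP; rewrite resultant_eq0 => size_gcd.
have nz_gcd : gcdp f g != 0 by rewrite -size_poly_eq0; apply: contraTneq size_gcd => ->.
have [e [r [def_gcd prim_r size_r]]] := primitiveXY_decomp nz_gcd.
have gcd_factor (p : P2) : gcdp f g %| p -> exists k, p = k * r.
  case/Pdiv.Idomain.dvdpP => [[c k] /= nz_c def_cp].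
  apply: (primitiveXY_gauss nz_c prim_r).
  by rewrite def_cp def_gcd -scalerAr scalerAl.
exists r; first by rewrite size_r.
by split; apply: gcd_factor; rewrite ?dvdp_gcdl ?dvdp_gcdr.
Qed.

End Bivariate.

Section Resultant.
Variable K : numClosedFieldType.
Local Notation P2 := {poly {poly K}}.

Definition evalXY (r : P2) (s t : K) : K := (map_poly (horner_eval s) r).[t].

Lemma evalXY_eq0 (r : P2) : (forall s t, evalXY r s t = 0) -> r = 0.
Proof.
move=> r0; apply/polyP => b; rewrite coef0; apply: poly_fun_eq0 => s.
have /(congr1 (coefp b)) := poly_fun_eq0 (r0 s).
by rewrite /= coef_map coef0.
Qed.

Lemma sum_shifted_coefs (p : P2) (s t : K) (k n : nat) : (k + size p <= n)%N ->
  \sum_(j < n) t ^+ j * (p`_(j - k) *+ (k <= j)%N).[s] = t ^+ k * evalXY p s t.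
Proof.
move=> le_n; have le_nk : (size p <= n - k)%N by lia.
rewrite /evalXY (horner_coef_wide (n := n - k)); last first.
  by rewrite /map_poly; apply: leq_trans (size_poly _ _) le_nk.
rewrite -(big_mkord xpredT (fun j => t ^+ j * (p`_(j - k) *+ (k <= j)%N).[s])).
rewrite (big_cat_nat (n := k)) //=; last by lia.
rewrite big_nat big1 ?add0r => [|j /andP[_ lt_jk]]; last first.
  by rewrite leqNgt lt_jk mulr0n horner0 mulr0.
rewrite -{1}[k]add0n big_addn big_mkord mulr_sumr; apply: eq_bigr => l _.
rewrite addnK leq_addl mulr1n coef_map /= /horner_eval exprD; ring.
Qed.

(* The row vector (1, t, t^2, ...) is in the kernel of the specialized Sylvester matrix. *)
Lemma resultant_common_root (f g : P2) s t :
  evalXY f s t = 0 -> evalXY g s t = 0 ->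
  (0 < (size g).-1 + (size f).-1)%N -> (resultant f g).[s] = 0.
Proof.
move=> f0 g0 pos_deg; rewrite /resultant -/(horner_eval s _) -det_map_mx -det_tr.
apply/eqP/det0P; exists (\row_(j < _) t ^+ j).
  apply/eqP => /rowP /(_ (Ordinal pos_deg)); rewrite !mxE expr0 => /eqP.
  by rewrite oner_eq0.
apply/rowP => i; rewrite mxE [RHS]mxE.
under eq_bigr => j _ do rewrite 3!mxE Sylvester_mxE /= horner_evalE.
case: (split i) => k; rewrite sum_shifted_coefs ?f0 ?g0 ?mulr0 //.
  by have := ltn_ord k; have := leqSpred (size f); set z := size f; set w := size g; lia.
by have := ltn_ord k; have := leqSpred (size g); set z := size f; set w := size g; lia.
Qed.

(* r has total degree at most d. *)
Definition tdegXY_le d (r : P2) := forall i, (size (r`_i)%R <= d.+1 - i)%N.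

Lemma size_tdegXY_le d (r : P2) : tdegXY_le d r -> (size r <= d.+1)%N.
Proof.
move=> r_d; apply/leq_sizeP => j lt_dj; apply/eqP; rewrite -size_poly_eq0 -leqn0.
by apply: leq_trans (r_d j) _; lia.
Qed.

Lemma size_Sylvester_mx_le (f g : P2) m n i j :
  tdegXY_le m f -> tdegXY_le n g -> Sylvester_mx f g i j != 0 ->
  (size (Sylvester_mx f g i j) + j
     <= i + (if (i < (size g).-1)%N then m.+1 else n.+1 - (size g).-1))%N.
Proof.
move=> f_m g_n; have := size_tdegXY_le g_n.
rewrite Sylvester_mxE; case: splitP => k ->.
  case: (leqP k j) => le_kj; rewrite ?mulr0n ?eqxx //.
  rewrite mulr1n -size_poly_gt0 => size_g size_gt0.
  by have := f_m (j - k)%N; move: size_gt0; set z := size _; lia.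
case: (leqP k j) => le_kj; rewrite ?mulr0n ?eqxx //.
rewrite mulr1n -size_poly_gt0 => size_g size_gt0.
by have := g_n (j - k)%N; move: size_gt0 size_g; set z := size _; set w := size g; lia.
Qed.

Lemma size_resultant_le (f g : P2) m n : tdegXY_le m f -> tdegXY_le n g ->
  (size (resultant f g) <= m * n + 1)%N.
Proof.
move=> f_m g_n; set m0 := (size f).-1; set n0 := (size g).-1.
have le_m0 : (m0 <= m)%N by have := size_tdegXY_le f_m; rewrite /m0; lia.
have le_n0 : (n0 <= n)%N by have := size_tdegXY_le g_n; rewrite /n0; lia.
pose c (i : 'I_(n0 + m0)) := (if i < n0 then m.+1 else n.+1 - n0)%N.
have sum_c : (\sum_i c i = n0 * m.+1 + m0 * (n.+1 - n0))%N.
  rewrite big_split_ord; congr (_ + _)%N.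
    rewrite (eq_bigr (fun=> m.+1)) => [|i _]; first by rewrite sum_nat_const card_ord.
    by rewrite /c /= ltn_ord.
  rewrite (eq_bigr (fun=> n.+1 - n0)%N) => [|i _]; first by rewrite sum_nat_const card_ord.
  by rewrite /c /= ltnNge leq_addr.
rewrite /resultant /determinant; apply: leq_trans (size_sum _ _ _) _.
apply/bigmax_leqP => s _; rewrite size_Msign.
have [->|nz] := eqVneq (\prod_i Sylvester_mx f g i (s i)) 0; first by rewrite size_poly0.
have sizes_le : (\sum_i size (Sylvester_mx f g i (s i)) + \sum_i (s i : nat)
                  <= \sum_(i < n0 + m0) (i : nat) + \sum_i c i)%N.
  rewrite -!big_split /=; apply: leq_sum => i _.
  apply: size_Sylvester_mx_le => //; apply: contra nz => entry0.
  by apply/prodf_eq0; exists i.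
have sum_s : (\sum_i (s i : nat) = \sum_(i < n0 + m0) (i : nat))%N.
  by rewrite [RHS](reindex_inj (@perm_inj _ s)).
apply: leq_trans (size_poly_prod_leq _ _) _; rewrite cardE size_enum_ord.
move: sizes_le; rewrite sum_s sum_c [X in (X <= _)%N]addnC leq_add2l -/m0 -/n0.
set S := (\sum_i _)%N => sizes_le.
have : (n0 * m + m0 * (n - n0) <= m * n)%N by nia.
move: sizes_le; rewrite mulnS subSn // mulnS; lia.
Qed.

End Resultant.

Section MsizeBounds.
Variable R : idomainType.

Lemma msizeM_leq n (p q : {mpoly R[n]}) : (msize (p * q) <= (msize p + msize q).-1)%N.
Proof.
have [->|nz_p] := eqVneq p 0; first by rewrite mul0r msize0.
have [->|nz_q] := eqVneq q 0; first by rewrite mulr0 msize0.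
by rewrite msizeM.
Qed.

Lemma msize_exp_linear n (q : {mpoly R[n]}) k :
  (msize q <= 2)%N -> (msize (q ^+ k) <= k.+1)%N.
Proof.
move=> q_lin; elim: k => [|k IHk]; first by rewrite expr0 msize1.
by rewrite exprS; apply: leq_trans (msizeM_leq _ _) _; lia.
Qed.

Lemma msize_prod_linear n (I : finType) (q : I -> {mpoly R[n]}) (m : I -> nat) :
  (forall i, msize (q i) <= 2)%N -> (msize (\prod_i q i ^+ m i) <= (\sum_i m i).+1)%N.
Proof.
move=> q_lin; elim/big_rec2: _ => [|i k p _ le_p]; first by rewrite msize1.
have le_qi := msize_exp_linear (m i) (q_lin i).
by apply: leq_trans (msizeM_leq _ _) _; lia.
Qed.

Lemma msize_comp_mpoly_linear n k (p : {mpoly R[n]}) (lq : n.-tuple {mpoly R[k]}) :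
  (forall i, msize (tnth lq i) <= 2)%N -> (msize (p \mPo lq) <= msize p)%N.
Proof.
move=> lq_lin; rewrite comp_mpolyE; apply: leq_trans (msize_sum _ _ _) _.
apply/bigmax_leqP_seq => m m_p _; apply: leq_trans (msizeZ_le _ _) _.
apply: leq_trans (msize_prod_linear _ lq_lin) _.
by rewrite -mdegE; apply: msize_mdeg_lt.
Qed.

End MsizeBounds.

Section PlaneCurves.
Variable K : numClosedFieldType.
Local Notation P2 := {poly {poly K}}.
Local Notation M2 := {mpoly K[2]}.

Definition eval2 (p : M2) (s t : K) : K := p.@[tnth [tuple s; t]].

Definition mdvd (h f : M2) := exists k, f = k * h.

Definition no_common_factor (fs : seq M2) :=
  forall h, nonconst h -> (forall f, f \in fs -> mdvd h f) -> False.

Definition common_zero (fs : seq M2) (q : K * K) :=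
  all (fun f => eval2 f q.1 q.2 == 0) fs.

(* The variable 'X_0 becomes the inner variable X of {poly {poly K}}, and 'X_1 the outer one. *)
Definition XYconst : K -> P2 := @polyC _ \o @polyC K.
Definition XYvar (i : 'I_2) : P2 := if i == 0 :> nat then 'X%:P else 'X.
Local Notation toXY := (mmap XYconst XYvar).
Definition ofX : {poly K} -> M2 := horner_eval 'X_0 \o map_poly (@mpolyC 2 K).
Definition ofXY : P2 -> M2 := horner_eval 'X_1 \o map_poly ofX.

Lemma toXYC c : toXY c%:MP = c%:P%:P.
Proof. exact: mmapC. Qed.

Lemma ofXYC c : ofXY c%:P%:P = c%:MP.
Proof.
by rewrite /ofXY /= /horner_eval map_polyC hornerC /ofX /= /horner_eval map_polyC hornerC.
Qed.

Lemma ofXYM : {morph ofXY : p q / p * q}.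
Proof. by move=> p q; rewrite /ofXY /= /horner_eval rmorphM hornerM. Qed.

Lemma toXY_horner (q : {poly M2}) x : toXY q.[x] = (map_poly toXY q).[toXY x].
Proof. by rewrite (horner_map toXY). Qed.

Lemma ofXYK : cancel ofXY toXY.
Proof.
move=> r; rewrite /ofXY /= /horner_eval toXY_horner -map_poly_comp mmapX mmap1U /=.
rewrite (eq_map_poly (g := polyC)) ?horner_map_polyC_X // => c /=.
rewrite /horner_eval toXY_horner -map_poly_comp mmapX mmap1U /=.
rewrite (eq_map_poly (g := polyC \o polyC)) => [|x /=]; last by rewrite toXYC.
by rewrite map_poly_comp horner_map horner_map_polyC_X.
Qed.

Lemma toXYK : cancel toXY ofXY.
Proof.
apply: (mpoly_rmorph_id (phi := ofXY \o toXY)) => [c|i].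
  by change (ofXY (toXY c%:MP) = c%:MP); rewrite toXYC ofXYC.
change (ofXY (toXY 'X_i) = 'X_i); rewrite mmapX mmap1U /XYvar /ofXY /= /horner_eval.
case: i => [[|[|//]] lt_i2] /=.
  rewrite map_polyC hornerC /ofX /= /horner_eval map_polyX hornerX.
  by congr 'X_ _; apply: val_inj.
by rewrite map_polyX hornerX; congr 'X_ _; apply: val_inj.
Qed.

Lemma ofXY_nonconst (r : P2) : (forall c, r <> c%:P%:P) -> nonconst (ofXY r).
Proof. by move=> r_nc c def_r; apply: (r_nc c); rewrite -(ofXYK r) def_r toXYC. Qed.

Lemma ofXY_dvd (f : M2) (r k : P2) : toXY f = k * r -> mdvd (ofXY r) f.
Proof. by move=> def_f; exists (ofXY k); rewrite -ofXYM -def_f toXYK. Qed.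

Lemma evalXY_toXY (p : M2) s t : evalXY (toXY p) s t = eval2 p s t.
Proof.
rewrite /evalXY -/(horner_eval t _).
have -> : horner_eval t (map_poly (horner_eval s) (toXY p)) =
          (horner_eval t \o map_poly (horner_eval s)) (toXY p) by [].
rewrite rmorph_mmap; apply: eq_mmap => [c|i] /=.
  by rewrite map_polyC /= /horner_eval !hornerC.
rewrite /XYvar (tnth_nth 0); case: i => [[|[|//]] lt_i2] /=.
  by rewrite map_polyC /= /horner_eval hornerC hornerX.
by rewrite map_polyX /horner_eval hornerX.
Qed.

Lemma tdegXY_le_toXY d (p : M2) : (msize p <= d.+1)%N -> tdegXY_le d (toXY p).
Proof.
move=> p_d i; rewrite /mmap coef_sum.
apply: leq_trans (size_sum _ _ _) _; apply/bigmax_leqP_seq => m m_p _.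
have deg_m := msize_mdeg_lt m_p; rewrite mdegE !big_ord_recr big_ord0 /= in deg_m.
rewrite /mmap1 !big_ord_recr big_ord0 /= mul1r /XYvar /= /XYconst /=.
rewrite mulrA -(rmorphXn polyC) -polyCM coefCM coefXn.
case: eqP => [->|_]; last by rewrite mulr0 size_poly0.
rewrite mulr1; apply: leq_trans (size_mul_leq _ _) _.
rewrite size_polyC size_polyXn; move: deg_m p_d.
set a := m _; set b := m _; set z := msize p; case: (_ != 0); lia.
Qed.

Lemma factor_XsubC_of_size1 (p : P2) a t : (size p <= 1)%N -> evalXY p a t = 0 ->
  exists k, p = k * ('X - a%:P)%:P.
Proof.
move=> size_p; rewrite [p]size1_polyC // /evalXY map_polyC hornerC /= /horner_eval.
by move=> /rootP /factor_theorem [k def_p0]; exists k%:P; rewrite def_p0 polyCM.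
Qed.

Lemma bezout_separated (f g : M2) m n (S : seq (K * K)) :
  (msize f <= m.+1)%N -> (msize g <= n.+1)%N -> no_common_factor [:: f; g] ->
  uniq (map fst S) -> {in S, forall q, common_zero [:: f; g] q} ->
  (size S <= m * n)%N.
Proof.
move=> f_m g_n coprime_fg uniq_S zeros.
have zero_f q : q \in S -> evalXY (toXY f) q.1 q.2 = 0.
  by move=> /zeros /and3P [/eqP f_q _ _]; rewrite evalXY_toXY.
have zero_g q : q \in S -> evalXY (toXY g) q.1 q.2 = 0.
  by move=> /zeros /and3P [_ /eqP g_q _]; rewrite evalXY_toXY.
have no_factorXY (r : P2) : (forall c, r <> c%:P%:P) ->
    (exists k, toXY f = k * r) -> (exists k, toXY g = k * r) -> False.
  move=> r_nc [k def_f] [k' def_g]; apply: (coprime_fg _ (ofXY_nonconst r_nc)).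
  move=> f0; rewrite !inE => /orP [] /eqP ->; [exact: ofXY_dvd def_f|exact: ofXY_dvd def_g].
have [pos_deg|] := ltnP 0 ((size (toXY g)).-1 + (size (toXY f)).-1).
  have [res0|nz_res] := eqVneq (resultant (toXY f) (toXY g)) 0.
    have [r size_r [dvd_f dvd_g]] := resultant_eq0_common_factor res0.
    case: (no_factorXY r) => // c def_r; move: size_r; rewrite def_r size_polyC.
    by case: (_ != 0).
  have := max_poly_roots nz_res (rs := map fst S); rewrite size_map => /(_ _ uniq_S).
  have := size_resultant_le (tdegXY_le_toXY f_m) (tdegXY_le_toXY g_n).
  suff roots : all (root (resultant (toXY f) (toXY g))) (map fst S).
    by move=> + /(_ roots); set z := size (resultant (toXY f) (toXY g)); lia.
  apply/allP => _ /mapP [q q_S ->]; apply/rootP.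
  exact: resultant_common_root (zero_f q q_S) (zero_g q q_S) pos_deg.
case: S uniq_S zeros zero_f zero_g => [//|q S] _ _ zero_f zero_g degY0; exfalso.
have q_S : q \in q :: S by rewrite mem_head.
apply: (no_factorXY ('X - q.1%:P)%:P).
- move=> c /polyC_inj def_c; have := size_XsubC q.1.
  by rewrite def_c size_polyC; case: (_ != 0).
- apply: factor_XsubC_of_size1 (zero_f q q_S); move: degY0.
  by set z := size (toXY f); set w := size (toXY g); lia.
- apply: factor_XsubC_of_size1 (zero_g q q_S); move: degY0.
  by set z := size (toXY f); set w := size (toXY g); lia.
Qed.

Lemma exists_separating_shear (S : seq (K * K)) : uniq S ->
  exists l, uniq (map (fun q => q.1 - l * q.2) S).
Proof.
move=> uniq_S; pose D (q q' : K * K) := (q.1 - q'.1)%:P - (q.2 - q'.2)%:P * 'X.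
have D_neq0 q q' : q' != q -> D q q' != 0.
  apply: contraNneq => D0; have := congr1 (coefp 0) D0; have := congr1 (coefp 1) D0.
  rewrite /= !(coefB, coefC, coefMX) /= sub0r subr0 => /eqP.
  rewrite oppr_eq0 subr_eq0 => /eqP eq2 /eqP; rewrite subr_eq0 => /eqP eq1.
  by case: q q' eq1 eq2 {D0} => [a b] [c d] /= -> ->.
pose P := \prod_(q <- S) \prod_(q' <- S | q' != q) D q q'.
have [|l P_l] := @exists_nonroot K P.
  rewrite prodf_seq_neq0; apply/allP => q _ /=.
  by rewrite prodf_seq_neq0; apply/allP => q' _; apply/implyP; apply: D_neq0.
exists l; rewrite map_inj_in_uniq // => q q' q_S q'_S eq_qq'.
apply/eqP; apply: contraNT P_l; rewrite eq_sym => neq_q'q.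
rewrite /root horner_prod prodf_seq_eq0; apply/hasP; exists q => //=.
rewrite horner_prod prodf_seq_eq0; apply/hasP; exists q' => //=; rewrite neq_q'q /=.
rewrite !hornerE; apply/eqP.
have -> : q.1 - q'.1 - (q.2 - q'.2) * l = q.1 - l * q.2 - (q'.1 - l * q'.2) by ring.
by rewrite eq_qq' subrr.
Qed.

Definition shear (l : K) (p : M2) : M2 := p \mPo [tuple 'X_0 + l *: 'X_1; 'X_1].

Lemma shearM l : {morph shear l : p q / p * q}.
Proof. by move=> p q; rewrite /shear rmorphM. Qed.

Lemma shearK l : cancel (shear l) (shear (- l)).
Proof.
apply: (mpoly_rmorph_id (phi := comp_mpoly [tuple 'X_0 + (- l) *: 'X_1; 'X_1]
  \o comp_mpoly [tuple 'X_0 + l *: 'X_1; 'X_1])) => [c|i] /=; first by rewrite !comp_mpolyC.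
rewrite comp_mpolyXU; case: i => [[|[|//]] lt_i2] /=.
  rewrite comp_mpolyD comp_mpolyZ !comp_mpolyXU /= scaleNr addrNK.
  by congr 'X_ _; apply: val_inj.
by rewrite comp_mpolyXU /=; congr 'X_ _; apply: val_inj.
Qed.

Lemma eval2_shear l p s t : eval2 (shear l p) s t = eval2 p (s + l * t) t.
Proof.
rewrite /eval2 /shear comp_mpoly_meval; apply: meval_eq => i.
case: i => [[|[|//]] lt_i2]; rewrite /= !(tnth_nth 0) /=.
  by rewrite mevalD mevalZ !mevalXU !(tnth_nth 0).
by rewrite mevalXU (tnth_nth 0).
Qed.

Lemma msize_shear l p : (msize (shear l p) <= msize p)%N.
Proof.
apply: msize_comp_mpoly_linear => i; rewrite (tnth_nth 0).
case: i => [[|[|//]] lt_i2] /=; last by rewrite msizeX mdeg1.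
apply: leq_trans (msizeD_le _ _) _; rewrite geq_max msizeX mdeg1 /=.
by apply: leq_trans (msizeZ_le _ _) _; rewrite msizeX mdeg1.
Qed.

Lemma no_common_factor_shear l fs :
  no_common_factor fs -> no_common_factor (map (shear l) fs).
Proof.
move=> coprime_fs h h_nc dvd_h; apply: (coprime_fs (shear (- l) h)).
  by move=> c def_h; apply: (h_nc c); rewrite -[h](shearK (- l)) opprK def_h /shear comp_mpolyC.
move=> f f_fs; have [k def_f] := dvd_h _ (map_f _ f_fs).
by exists (shear (- l) k); rewrite -shearM -def_f shearK.
Qed.

Lemma bezout_coprime (f g : M2) m n (S : seq (K * K)) :
  (msize f <= m.+1)%N -> (msize g <= n.+1)%N -> no_common_factor [:: f; g] ->
  uniq S -> {in S, forall q, common_zero [:: f; g] q} -> (size S <= m * n)%N.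
Proof.
move=> f_m g_n coprime_fg uniq_S zeros; have [l sep_l] := exists_separating_shear uniq_S.
rewrite -(size_map (fun q => (q.1 - l * q.2, q.2))).
apply: (bezout_separated (f := shear l f) (g := shear l g)).
- exact: leq_trans (msize_shear _ _) f_m.
- exact: leq_trans (msize_shear _ _) g_n.
- exact: (no_common_factor_shear (l := l) coprime_fg).
- by rewrite -map_comp.
move=> _ /mapP [q q_S ->]; rewrite /common_zero /= !eval2_shear /= subrK.
exact: zeros.
Qed.

End PlaneCurves.

Section Family.
Variable K : numClosedFieldType.
Local Notation M2 := {mpoly K[2]}.

Lemma nonconst_neq0 (p : M2) : nonconst p -> p != 0.
Proof. by move=> p_nc; apply/eqP => p0; apply: (p_nc 0); rewrite p0 mpolyC0. Qed.

Lemma nonconst_X0 : nonconst ('X_0 : M2).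
Proof.
by move=> c /(congr1 (fun p : M2 => msize p)); rewrite msizeX mdeg1 msizeC; case: (_ != 0).
Qed.

Lemma nonconst_msize (p : M2) : nonconst p -> (2 <= msize p)%N.
Proof. by move=> p_nc; rewrite ltnNge; apply/negP => /msize1_polyC /p_nc. Qed.

Lemma no_common_factor_const (f : M2) : no_common_factor [:: f] -> exists c, f = c%:MP.
Proof.
move=> coprime_f; apply: NNPP => f_nc; apply: (coprime_f f).
  by move=> c def_f; apply: f_nc; exists c.
by move=> g; rewrite inE => /eqP ->; exists 1; rewrite mul1r.
Qed.

Lemma no_common_factor_dvd (h f : M2) fs :
  mdvd h f -> no_common_factor (f :: fs) -> no_common_factor (h :: fs).
Proof.
move=> [k def_f] coprime_f h' h'_nc dvd_h'; apply: (coprime_f h' h'_nc) => g.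
rewrite inE => /orP [/eqP ->|g_fs]; last by apply: dvd_h'; rewrite inE g_fs orbT.
by have [x def_h] := dvd_h' h (mem_head _ _); exists (k * x); rewrite def_f def_h mulrA.
Qed.

Lemma no_common_factor_drop (f g : M2) fs :
  mdvd f g -> no_common_factor (f :: g :: fs) -> no_common_factor (f :: fs).
Proof.
move=> [k def_g] coprime_fg h h_nc dvd_h; apply: (coprime_fg h h_nc) => f'.
rewrite !inE => /or3P [/eqP ->|/eqP ->|f'_fs].
- exact: dvd_h (mem_head _ _).
- by have [x def_f] := dvd_h f (mem_head _ _); exists (k * x); rewrite def_g def_f mulrA.
- by apply: dvd_h; rewrite inE f'_fs orbT.
Qed.

Lemma size_common_zeros_mul (h k : M2) fs e1 e2 (S : seq (K * K)) :
  (forall S', uniq S' -> {in S', forall q, common_zero (h :: fs) q} -> size S' <= e1)%N ->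
  (forall S', uniq S' -> {in S', forall q, common_zero (k :: fs) q} -> size S' <= e2)%N ->
  uniq S -> {in S, forall q, common_zero (k * h :: fs) q} -> (size S <= e1 + e2)%N.
Proof.
move=> zeros_h zeros_k uniq_S zeros.
rewrite -(count_predC [pred q | eval2 h q.1 q.2 == 0]) -!size_filter.
apply: leq_add; [apply: zeros_h | apply: zeros_k]; rewrite ?filter_uniq //.
  by move=> q; rewrite mem_filter => /andP [h_q /zeros /andP [_ fs_q]]; apply/andP.
move=> q; rewrite mem_filter /= => /andP [nz_hq /zeros /andP [kh_q fs_q]].
apply/andP; split=> //; move: kh_q.
by rewrite /eval2 mevalM mulf_eq0 (negPf nz_hq) orbF.
Qed.

Lemma bezout_family (fs : seq M2) d e f0 (S : seq (K * K)) :
  f0 != 0 -> (msize f0 <= e.+1)%N -> {in fs, forall f, msize f <= d.+1}%N ->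
  no_common_factor (f0 :: fs) -> uniq S -> {in S, forall q, common_zero (f0 :: fs) q} ->
  (size S <= e * d)%N.
Proof.
elim: fs e f0 S => [|g fs IHfs] e f0 S nz_f0 f0_e fs_d.
  move=> /no_common_factor_const [c def_f0] _ zeros; case: S zeros => // q S.
  move=> /(_ q (mem_head _ _)); rewrite /common_zero /= andbT /eval2 def_f0 mevalC.
  by move: nz_f0; rewrite def_f0 mpolyC_eq0 => /negPf ->.
have g_d := fs_d g (mem_head _ _).
elim/ltn_ind: e f0 S nz_f0 f0_e => e IHe f0 S nz_f0 f0_e coprime uniq_S zeros.
case: (classic (exists h, nonconst h /\ mdvd h f0 /\ mdvd h g)); last first.
  move=> none; apply: (bezout_coprime f0_e g_d) => //.
    by move=> h h_nc dvd_h; apply: none; exists h; split=> //; split; apply: dvd_h;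
      rewrite !inE eqxx ?orbT.
  by move=> q /zeros /and3P [f0_q g_q _]; rewrite /common_zero /= f0_q g_q.
move=> [h [h_nc [[k def_f0] [k' def_g]]]].
have [k_nc|] := classic (nonconst k); last first.
  (* A constant cofactor k makes f0 divide g, so g can be dropped from the family. *)
  move=> /not_all_ex_not [c /NNPP def_k].
  have nz_c : c != 0 by apply: contra nz_f0 => /eqP c0; rewrite def_f0 def_k c0 mul0r.
  apply: (IHfs e f0) => // [f f_fs||q /zeros /and3P [f0_q _ fs_q]].
  - by apply: fs_d; rewrite inE f_fs orbT.
  - apply: no_common_factor_drop coprime; exists (k' * (c^-1)%:MP).
    by rewrite def_g def_f0 def_k mulrA -[k' * _ * _]mulrA -mpolyCM mulVf // mpolyC1 mulr1.
  - by rewrite /common_zero /= f0_q.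
have [le_h le_k] := (nonconst_msize h_nc, nonconst_msize k_nc).
have size_f0 : msize f0 = (msize k + msize h).-1 by rewrite def_f0 msizeM ?nonconst_neq0.
apply: leq_trans (_ : _ <= ((msize h).-1 + (msize k).-1) * d)%N _; last first.
  by rewrite leq_mul2r; lia.
rewrite def_f0 in coprime zeros; rewrite mulnDl.
apply: size_common_zeros_mul uniq_S zeros.
  move=> S' uniq_S' zeros'; apply: (IHe _ _ h) => //; try lia.
  - exact: nonconst_neq0.
  - by apply: no_common_factor_dvd coprime; exists k.
move=> S' uniq_S' zeros'; apply: (IHe _ _ k) => //; try lia.
- exact: nonconst_neq0.
- by apply: no_common_factor_dvd coprime; exists h; rewrite mulrC.
Qed.

Lemma no_common_factor_neq0 (fs : seq M2) :
  no_common_factor fs -> exists2 f, f \in fs & f != 0.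
Proof.
move=> coprime; apply/hasP; apply: contraT => /hasPn fs0; exfalso.
apply: (coprime _ nonconst_X0) => f /fs0 /negPn /eqP ->.
by exists 0; rewrite mul0r.
Qed.

Lemma bezout_family_mem (fs : seq M2) d f0 (S : seq (K * K)) :
  f0 \in fs -> f0 != 0 -> {in fs, forall f, msize f <= d.+1}%N -> no_common_factor fs ->
  uniq S -> {in S, forall q, common_zero fs q} -> (size S <= d * d)%N.
Proof.
move=> f0_fs nz_f0 fs_d coprime uniq_S zeros.
apply: (bezout_family (fs := fs) (f0 := f0)) => //; first exact: fs_d.
  move=> h h_nc dvd_h; apply: (coprime h h_nc) => f f_fs.
  by apply: dvd_h; rewrite inE f_fs orbT.
move=> q /zeros zero_q; apply/andP; split=> //.
exact: (allP zero_q).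
Qed.

End Family.

Section FourVariables.
Variable K : numClosedFieldType.
Local Notation M2 := {mpoly K[2]}.
Local Notation M4 := {mpoly K[4]}.
Local Notation Q := {poly {poly M2}}.

(* F(x, y, s, t) as a polynomial in x (inner) and y (outer) over K[s, t]. *)
Definition splitC : K -> Q := @polyC _ \o @polyC _ \o @mpolyC 2 K.
Definition splitX (i : 'I_4) : Q :=
  match val i with
  | 0 => 'X%:P | 1 => 'X | 2 => ('X_0 : M2)%:P%:P | _ => ('X_1 : M2)%:P%:P
  end.
Local Notation split4 := (mmap splitC splitX).
Definition join4 : Q -> M4 :=
  horner_eval 'X_iy \o map_poly (horner_eval 'X_ix \o map_poly (@embed_st K)).

Lemma join4M : {morph join4 : p q / p * q}.
Proof. by move=> p q; rewrite /join4 rmorphM. Qed.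

Lemma join4C (h : M2) : join4 h%:P%:P = embed_st h.
Proof.
change ((map_poly (horner_eval 'X_ix \o map_poly (@embed_st K)) h%:P%:P).['X_iy] = embed_st h).
by rewrite map_polyC hornerC /= /horner_eval map_polyC hornerC.
Qed.

Lemma split4K : cancel split4 join4.
Proof.
apply: (mpoly_rmorph_id (phi := join4 \o split4)) => [c|i].
  change (join4 (split4 c%:MP) = c%:MP).
  by rewrite mmapC /splitC /= join4C /embed_st comp_mpolyC.
change (join4 (split4 'X_i) = 'X_i); rewrite mmapX mmap1U /splitX.
case: i => [[|[|[|[|//]]]] lt_i4]; rewrite /join4 /= horner_evalE.
all: rewrite ?map_polyC ?map_polyX ?hornerC ?hornerX /= ?horner_evalE.
all: rewrite ?map_polyC ?map_polyX ?hornerC ?hornerX /= ?comp_mpolyXU /=.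
all: by congr 'X_ _; apply: val_inj.
Qed.

Lemma evalXY_split4 (p : M4) x y s t :
  evalXY (map_poly (map_poly (meval (tnth [tuple s; t]))) (split4 p)) x y = ev4 p x y s t.
Proof.
set v := tnth [tuple s; t]; rewrite /evalXY -map_poly_comp -/(horner_eval y _).
have -> : horner_eval y (map_poly (horner_eval x \o map_poly (meval v)) (split4 p)) =
    (horner_eval y \o map_poly (horner_eval x \o map_poly (meval v))) (split4 p) by [].
rewrite rmorph_mmap /ev4; apply: eq_mmap => [c|i] /=.
  rewrite /splitC /= horner_evalE map_polyC hornerC /= horner_evalE map_polyC hornerC.
  exact: mevalC.
rewrite (tnth_nth 0); case: i => [[|[|[|[|//]]]] lt_i4] /=.
all: rewrite horner_evalE ?map_polyC ?map_polyX ?hornerC ?hornerX //= horner_evalE.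
- by rewrite map_polyX hornerX.
- by rewrite map_polyC hornerC; apply: mevalXU.
- by rewrite map_polyC hornerC; apply: mevalXU.
Qed.

Lemma big_ord4 (R : Type) (idx : R) (op : Monoid.law idx) (F : 'I_4 -> R) :
  \big[op/idx]_i F i = op (op (op (F ix) (F iy)) (F is_)) (F it).
Proof.
rewrite !big_ord_recr big_ord0 Monoid.mul1m.
by congr (op (op (op (F _) (F _)) (F _)) (F _)); apply: val_inj.
Qed.

Lemma msize_coef_split4 (p : M4) b a : (msize ((split4 p)`_b)`_a <= msize p)%N.
Proof.
rewrite /mmap !coef_sum; apply: leq_trans (msize_sum _ _ _) _.
apply/bigmax_leqP_seq => m m_p _.
have := msize_mdeg_lt m_p; rewrite mdegE big_ord4 /= => deg_m.
rewrite /mmap1 big_ord4 /splitX /splitC /=.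
set u := p@_m *: (('X_0 : M2) ^+ m is_ * 'X_1 ^+ m it).
have -> : (p@_m)%:MP%:P%:P * ('X%:P ^+ m ix * 'X^(m iy) * ('X_0 : M2)%:P%:P ^+ m is_
            * ('X_1 : M2)%:P%:P ^+ m it) = (u%:P * 'X^(m ix))%:P * 'X^(m iy) :> Q.
  rewrite /u -mul_mpolyC !polyCM !(rmorphXn polyC) /=.
  by rewrite -!mulrA; congr (_ * _); rewrite [LHS]mulrA [RHS]mulrA [RHS]mulrC.
rewrite coefCM coefXn mulr_natr coefMn coefCM coefXn mulr_natr.
have size_u : (msize u <= (m is_ + m it).+1)%N.
  have X_lin (i : 'I_2) : (msize ('X_i : M2) <= 2)%N by rewrite msizeX mdeg1.
  apply: leq_trans (msizeZ_le _ _) _; apply: leq_trans (msizeM_leq _ _) _.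
  move: (msize_exp_linear (m is_) (X_lin 0)) (msize_exp_linear (m it) (X_lin 1)).
  set z := msize _; set w := msize _; lia.
case: (b == _); case: (a == _); rewrite ?mulr0n ?msize0 //= ?mulr1n.
by move: deg_m size_u; set z := msize u; set w := msize p; lia.
Qed.

Definition coefs4 (F : M4) : seq M2 := flatten [seq polyseq p | p <- split4 F].

Lemma coefs4P (F : M4) f : f \in coefs4 F -> exists b a, f = ((split4 F)`_b)`_a.
Proof.
by case/flattenP => _ /mapP [p /(nthP 0) [b _ <-] ->] /(nthP 0) [a _ <-]; exists b, a.
Qed.

Lemma mem_coefs4 (F : M4) b a :
  ((split4 F)`_b)`_a != 0 -> ((split4 F)`_b)`_a \in coefs4 F.
Proof.
move=> nz_ba; apply/flattenP; exists ((split4 F)`_b : seq M2).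
  apply/map_f/mem_nth; rewrite ltnNge; apply: contra nz_ba => size_le.
  by rewrite (nth_default 0 size_le) coef0.
by apply: mem_nth; rewrite ltnNge; apply: contra nz_ba => /(nth_default 0) ->.
Qed.

Lemma cartesian_of_common_factor (F : M4) (h : M2) :
  nonconst h -> (forall f, f \in coefs4 F -> mdvd h f) -> cartesian F.
Proof.
move=> h_nc dvd_h; set A := split4 F.
have dvd_coef b a : exists k, (A`_b)`_a == k * h.
  have [->|nz_ba] := eqVneq ((A`_b)`_a) 0; first by exists 0; rewrite mul0r.
  by have [k ->] := dvd_h _ (mem_coefs4 nz_ba); exists k.
pose L : Q := \poly_(b < size A) \poly_(a < size A`_b) xchoose (dvd_coef b a).
have def_A : A = h%:P%:P * L.
  apply/polyP => b; apply/polyP => a; rewrite !coefCM !coef_poly.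
  case: ltnP => lt_b; last by rewrite (nth_default 0 lt_b) !nth_default ?size_poly0 ?mulr0.
  rewrite coef_poly; case: ltnP => lt_a; last by rewrite nth_default // mulr0.
  by rewrite mulrC; apply/eqP; exact: (xchooseP (dvd_coef b a)).
exists 'X_0, h, 0, (join4 L); split => //; first exact: nonconst_X0.
by rewrite mulr0 add0r -[F]split4K -/A def_A join4M join4C.
Qed.

Lemma no_common_factor_coefs4 (F : M4) : ~ cartesian F -> no_common_factor (coefs4 F).
Proof. by move=> not_cart h h_nc /(cartesian_of_common_factor h_nc). Qed.

Lemma msize_coefs4 (F : M4) : {in coefs4 F, forall f, msize f <= (tdeg F).+1}%N.
Proof.
by move=> f /coefs4P [b [a ->]]; apply: leq_trans (msize_coef_split4 _ _ _) (leqSpred _).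
Qed.

Lemma common_zero_coefs4 (F : M4) (q : K * K) :
  (forall x y, ev4 F x y q.1 q.2 = 0) -> common_zero (coefs4 F) q.
Proof.
move=> full; apply/allP => f /coefs4P [b [a ->]]; apply/eqP.
have /(congr1 (fun r : {poly {poly K}} => (r`_b)`_a)) :
    map_poly (map_poly (meval (tnth [tuple q.1; q.2]))) (split4 F) = 0.
  by apply: evalXY_eq0 => x y; rewrite evalXY_split4 full.
by rewrite !coef_map /= !coef0.
Qed.

End FourVariables.

Theorem lemma2p4 (R : realType) (F : {mpoly R[i][4]}) :
  ~ cartesian F ->
  forall S : seq (R[i] * R[i]),
    uniq S ->
    (forall q, q \in S -> forall x y : R[i], ev4 F x y q.1 q.2 = 0) ->
    (size S <= (tdeg F) ^ 2)%N.
Proof.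
move=> not_cart S uniq_S full.
have coprime := no_common_factor_coefs4 not_cart.
have [f0 f0_F nz_f0] := no_common_factor_neq0 coprime.
rewrite -mulnn; apply: (bezout_family_mem f0_F nz_f0 (@msize_coefs4 _ F) coprime uniq_S).
by move=> q /full; apply: common_zero_coefs4.
Qed.
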